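(* Let $n\geq 2$ be an integer. Then \[ s^n+s^{-n}+n(s+s^{-1})\equiv(1+s)^4 r_n(s) \pmod 2\] for some integer Laurent polynomial $r_n(s)\in\mathbb{Z}[s,s^{-1}]$ such that $r_n(1)=n/2$ if $n$ is even and $r_n(1)=0$ if $n$ is odd.
   Context: Congruence modulo $2$ of integer Laurent polynomials means equality of their images in $\mathbb{Z}_2[s,s^{-1}]$ (coefficients reduced mod 2). *)

From HB Require Import structures.
From mathcomp Require Import all_boot all_order all_algebra.
Set Implicit Arguments. Unset Strict Implicit. Unset Printing Implicit Defensive.
Import Order.TTheory GRing.Theory Num.Theory.
Local Open Scope ring_scope.

(* An integer Laurent polynomial is represented by a pair (k, p) with
   k : nat and p : {poly int}, standing for s^(-k) * p(s).
   Every element of Z[s,s^-1] has such a representation. *)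
Definition laurent := (nat * {poly int})%type.

Definition lconst (c : int) : laurent := (0%N, c%:P).
Definition lXn (m : nat) : laurent := (0%N, 'X^m).
Definition lXinvn (m : nat) : laurent := (m, 1).

Definition ladd (L1 L2 : laurent) : laurent :=
  (((fst L1) + (fst L2))%N, 'X^(fst L2) * (snd L1) + 'X^(fst L1) * (snd L2)).
Definition lmul (L1 L2 : laurent) : laurent :=
  (((fst L1) + (fst L2))%N, (snd L1) * (snd L2)).

Definition leval (x : rat) (L : laurent) : rat :=
  (map_poly (fun z : int => z%:~R) (snd L)).[x] / x ^+ (fst L).

(* Congruence modulo 2: equality of images in Z_2[s,s^-1].  Since
   s^(-k1) p1 = s^(-k2) p2 in F_2[s,s^-1] iff s^k2 p1 = s^k1 p2 in F_2[s],
   we compare the reductions of these polynomials. *)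
Definition red2 (p : {poly int}) : {poly 'F_2} :=
  map_poly (fun z : int => z%:~R) p.
Definition lcong2 (L1 L2 : laurent) : Prop :=
  red2 ('X^(fst L2) * (snd L1)) = red2 ('X^(fst L1) * (snd L2)).

From HB Require Import structures.
From mathcomp Require Import all_boot all_order all_algebra.
From mathcomp Require Import ring.
Import Order.TTheory GRing.Theory Num.Theory.
Local Open Scope ring_scope.

(* Clearing denominators, the claim is about s (1 + s^2n) + n s^n (1 + s)^2
   modulo 2.  For n = 2m this is s (1 + s^4m) = (1 + s^4) s (1 + s^4 + ... + s^4(m-1)),
   and 1 + s^4 = (1 + s)^4 in characteristic 2; the quotient takes the value m at 1.
   For n = 2m + 1, writing t = s^2, it is s (1 + t^m) (1 + t^(m+1)), and both
   factors are divisible by 1 + t = (1 + s)^2; the quotient takes the value m (m + 1)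
   at 1, which is even, so an even constant corrects it to 0 without changing its
   residue modulo 2. *)

(* [lhs_numer n s] is s^(n+1) (s^n + s^-n + n (s + s^-1)), and [r_numer n s] is
   s^(n+1) r_n(s) modulo 2. *)
Definition lhs_numer {R : nzSemiRingType} n (x : R) :=
  x * (x ^+ n * x ^+ n + 1) + x ^+ n * (n%:R * (x * x + 1)).

Definition r_numer {R : nzSemiRingType} n (x : R) :=
  if odd n then x * (\sum_(i < n./2) (x ^+ 2) ^+ i) * (\sum_(i < n./2.+1) (x ^+ 2) ^+ i)
  else x * \sum_(i < n./2) (x ^+ 4) ^+ i.

Section Char2.

Variable R : comNzRingType.
Hypothesis pcharR2 : 2 \in [pchar R].

Lemma sqrrD_pchar2 (x y : R) : (x + y) ^+ 2 = x ^+ 2 + y ^+ 2.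
Proof. by rewrite sqrrD mulrn_pchar // addr0. Qed.

Lemma natr_double_pchar2 m : (m.*2)%:R = 0 :> R.
Proof. by rewrite -mul2n natrM (pcharf0 pcharR2) mul0r. Qed.

Lemma subrX1_pchar2 (x : R) m : x ^+ m + 1 = (1 + x) * \sum_(i < m) x ^+ i.
Proof. by have := subrX1 x m; rewrite !oppr_pchar2 // => ->; rewrite addrC. Qed.

Lemma lhs_numer_double_pchar2 (x : R) m :
  lhs_numer m.*2 x = (1 + x) ^+ 4 * r_numer m.*2 x.
Proof.
rewrite /lhs_numer /r_numer odd_double doubleK natr_double_pchar2 mul0r mulr0 addr0.
rewrite -exprD addnn -!mul2n mulnA exprM.
have -> : (1 + x) ^+ 4 = 1 + x ^+ 4.
  by rewrite (exprM _ 2 2) !sqrrD_pchar2 !expr1n -exprM.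
by rewrite subrX1_pchar2 addrC mulrCA.
Qed.

Lemma lhs_numer_doubleS_pchar2 (x : R) m :
  lhs_numer m.*2.+1 x = (1 + x) ^+ 4 * r_numer m.*2.+1 x.
Proof.
rewrite /lhs_numer /r_numer /= odd_double /= uphalf_double.
have -> : (1 + x) ^+ 4 = (1 + x ^+ 2) ^+ 2.
  by rewrite (exprM _ 2 2) sqrrD_pchar2 expr1n.
have -> : forall a b : R,
    (1 + x ^+ 2) ^+ 2 * (x * a * b) = x * ((1 + x ^+ 2) * a) * ((1 + x ^+ 2) * b).
  by move=> a b; ring.
rewrite -!subrX1_pchar2 -nat1r natr_double_pchar2 addr0 mul1r.
rewrite exprS -mul2n exprM [_ ^+ m.+1]exprS.
by move: (x ^+ 2 ^+ m) => u; ring.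
Qed.

Lemma lhs_numer_factor_pchar2 n (x : R) :
  lhs_numer n x = (1 + x) ^+ 4 * r_numer n x.
Proof.
rewrite -[n]odd_double_half; case: odd => /=.
- exact: lhs_numer_doubleS_pchar2.
- exact: lhs_numer_double_pchar2.
Qed.

End Char2.

Lemma rmorph_lhs_numer (S T : nzSemiRingType) (f : {rmorphism S -> T}) n x :
  f (lhs_numer n x) = lhs_numer n (f x).
Proof. by rewrite /lhs_numer !(rmorphD, rmorphM, rmorphXn, rmorph_nat, rmorph1). Qed.

Lemma rmorph_r_numer (S T : nzSemiRingType) (f : {rmorphism S -> T}) n x :
  f (r_numer n x) = r_numer n (f x).
Proof.
have sumX k m : f (\sum_(i < m) (x ^+ k) ^+ i) = \sum_(i < m) (f x ^+ k) ^+ i.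
  by rewrite rmorph_sum; apply: eq_bigr => i _; rewrite !rmorphXn.
by rewrite /r_numer; case: odd; rewrite !rmorphM !sumX.
Qed.

Lemma horner_r_numer (R : comNzRingType) n (x : R) : (r_numer n 'X).[x] = r_numer n x.
Proof. by rewrite -horner_evalE rmorph_r_numer /= horner_evalE hornerX. Qed.

Lemma r_numer1 (R : nzSemiRingType) n :
  r_numer n (1 : R) = if odd n then (n./2 * n./2.+1)%:R else n./2%:R.
Proof.
have sum1 k m : \sum_(i < m) ((1 : R) ^+ k) ^+ i = m%:R.
  by rewrite expr1n; under eq_bigr do rewrite expr1n; rewrite sumr_const card_ord.
by rewrite /r_numer natrM; case: odd; rewrite !sum1 mul1r.
Qed.

HB.instance Definition _ := GRing.RMorphism.copy red2 (map_poly (fun z : int => z%:~R)).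

Lemma red2_lhs_numer_factor n :
  red2 (lhs_numer n 'X) = red2 ((1 + 'X) ^+ 4 * r_numer n 'X).
Proof.
rewrite rmorph_lhs_numer rmorphM rmorphXn rmorphD rmorph1 rmorph_r_numer /= /red2 map_polyX.
by apply: lhs_numer_factor_pchar2; rewrite pchar_poly pchar_Fp.
Qed.

Lemma red2_lift_at1 (p : {poly int}) (v : int) :
  (2 %| v - p.[1])%Z -> exists q, red2 q = red2 p /\ q.[1] = v.
Proof.
move=> p1v; exists (p + (v - p.[1])%:P); split; last by rewrite hornerD hornerC subrKC.
rewrite rmorphD /= /red2 map_polyC /=.
by move: p1v; rewrite (dvdz_pcharf (pchar_Fp (isT : prime 2))) => /eqP ->; rewrite addr0.
Qed.

Lemma lcong2_red2 (L1 L2 : laurent) :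
  fst L1 = fst L2 -> red2 (snd L1) = red2 (snd L2) -> lcong2 L1 L2.
Proof. by rewrite /lcong2 => -> e12; rewrite !rmorphM /= e12. Qed.

Lemma leval1 (L : laurent) : leval 1 L = (snd L).[1]%:~R.
Proof. by rewrite /leval expr1n divr1 -(rmorph1 intr) horner_map. Qed.

Theorem lemma3p12 (n : nat) (hn : (2 <= n)%N) :
  exists r : laurent,
    lcong2
      (ladd (ladd (lXn n) (lXinvn n))
            (lmul (lconst n%:Z) (ladd (lXn 1) (lXinvn 1))))
      (lmul (lmul (lmul (lmul (ladd (lconst 1) (lXn 1)) (ladd (lconst 1) (lXn 1)))
                        (ladd (lconst 1) (lXn 1))) (ladd (lconst 1) (lXn 1))) r)
    /\ leval 1 r = (if ~~ odd n then n%:R / 2 else 0).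
Proof.
pose v : int := if odd n then 0 else n./2.
have [q [q_r q1]] : exists q, red2 q = red2 (r_numer n 'X) /\ q.[1] = v.
  apply: red2_lift_at1; rewrite horner_r_numer r_numer1 /v.
  case: odd; last by rewrite [X in _ - X]natz subrr dvdz0.
  by rewrite sub0r dvdzE abszN !natz !absz_nat dvdn2 oddM oddS andbN.
exists ((n + 1)%N, q); split.
- apply: lcong2_red2 => //=.
  rewrite -[n%:Z]natz polyC_natr !expr0 !expr1 !mul1r add0n -/(lhs_numer n 'X).
  by rewrite -expr2 -!exprSr red2_lhs_numer_factor !rmorphM /= q_r.
- rewrite leval1 /= q1 /v; case: ifP => odd_n //=.
  by rewrite -[in RHS](odd_double_half n) odd_n add0n -muln2 natrM mulfK.
Qed.
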